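(* For given cardinality vectors $\boldsymbol\varrho,\boldsymbol\varphi,\boldsymbol\psi$, the expected number of edges of the primary IDNC graph is \[ \mathbb E\big[|\mathcal E_\rho|\big]=\frac12\sum_{i=1}^M\psi_i\Bigg\{\sum_{k=1,k\ne i}^M\frac{\psi_k}{N}\Big(1+\frac{\varrho_k\varrho_i}{N-1}\Big)\Bigg\}. \]
   Context: A sender holds a frame $\mathcal N$ of $N\ge2$ packets and serves receivers $\mathcal M=\{1,\dots,M\}$. For each receiver $i$ there are sets $\mathcal H_i\subseteq\mathcal N$ (Has set), $\mathcal L_i=\mathcal N\setminus\mathcal H_i$ (Lacks set) and $\mathcal W_i\subseteq\mathcal L_i$ (Wants set), with cardinalities $\varrho_i=|\mathcal H_i|$, $\varphi_i=N-\varrho_i$, $\psi_i=|\mathcal W_i|$. The primary IDNC graph $\mathcal G_\rho$ has a vertex $v_{ij}$ for every receiver $i$ and every $j\in\mathcal W_i$; two distinct vertices $v_{ij},v_{kl}$ are adjacent iff (C1) $j=l$, or (C2) $j\in\mathcal H_k$ and $l\in\mathcal H_i$. $\mathcal E_\rho$ is its edge set. Expectations are taken in the model that ignores set contents: given the cardinalities, the pairs $(\mathcal H_k,\mathcal W_k)$, $k\in\mathcal M$, are independent, $\mathcal H_k$ is a uniformly random $\varrho_k$-element subset of $\mathcal N$, and given $\mathcal H_k$, $\mathcal W_k$ is a uniformly random $\psi_k$-element subset of $\mathcal N\setminus\mathcal H_k$. *)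

From mathcomp Require Import all_boot all_order all_algebra.
Set Implicit Arguments. Unset Strict Implicit. Unset Printing Implicit Defensive.
Import Order.TTheory GRing.Theory Num.Theory.

(* Packets: 'I_N ; receivers: 'I_M.  A configuration assigns to each receiver k
   a pair (H_k, W_k) of packet sets (Has set, Wants set). *)
Definition config (M N : nat) := {ffun 'I_M -> {set 'I_N} * {set 'I_N}}.

Definition Hs M N (c : config M N) (k : 'I_M) : {set 'I_N} := (c k).1.
Definition Ws M N (c : config M N) (k : 'I_M) : {set 'I_N} := (c k).2.

Definition idnc_vertices M N (c : config M N) : {set 'I_M * 'I_N} :=
  [set v | v.2 \in Ws c v.1].

Definition idnc_adj M N (c : config M N) (u v : 'I_M * 'I_N) : bool :=
  (u.2 == v.2) || ((u.2 \in Hs c v.1) && (v.2 \in Hs c u.1)).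

Definition idnc_edges M N (c : config M N) : {set {set 'I_M * 'I_N}} :=
  [set e : {set 'I_M * 'I_N} | (e \subset idnc_vertices c) && (#|e| == 2) &&
     [forall u in e, forall v in e, (u != v) ==> idnc_adj c u v]].

Definition valid_pair N (rho psi : nat) (p : {set 'I_N} * {set 'I_N}) : bool :=
  [&& #|p.1| == rho, p.2 \subset ~: p.1 & #|p.2| == psi].

(* Probability of a configuration in the model: independent over receivers,
   H_k uniform among rho_k-subsets of the N packets, and given H_k, W_k uniform
   among psi_k-subsets of N \ H_k (which has N - rho_k elements). *)
Definition config_prob (R : numFieldType) M N (rho psi : 'I_M -> nat)
    (c : config M N) : R :=
  \prod_(k : 'I_M)
     (if valid_pair (rho k) (psi k) (c k)
      then ('C(N, rho k)%:R)^-1 * ('C(N - rho k, psi k)%:R)^-1 else 0).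

Definition expected_edges (R : numFieldType) M N (rho psi : 'I_M -> nat) : R :=
  \sum_(c : config M N) config_prob R rho psi c * #|idnc_edges c|%:R.

From mathcomp Require Import all_boot all_order all_algebra all_fingroup ring zify.
Import Order.TTheory GRing.Theory Num.Theory.
Set Implicit Arguments. Unset Strict Implicit. Unset Printing Implicit Defensive.
Local Open Scope ring_scope.

(* |E_rho| is half the number of ordered pairs of adjacent vertices.
   Since W_i and H_i are disjoint, two vertices of the same receiver are never
   adjacent, while for i <> k the pair (v_ij, v_kl) is adjacent with indicator
   1{j in W_i} 1{j = l} 1{l in W_k} + 1{j in W_i, l in H_i} 1{l in W_k, j in H_k}.
   Receivers are independent, so its expectation is a product of one-receiver
   means, and these follow from the invariance of the model under permutations of
   the packets: P(j in W) = psi / N, and P(j in W, l in H) = psi rho / (N (N - 1))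
   for j <> l, because summing over all pairs (j, l) gives E[|W| |H|] = psi rho
   while the diagonal terms vanish.  Summing over the N diagonal and N (N - 1)
   off-diagonal pairs (j, l) yields the formula. *)

Lemma sumr_mem_card (R : numFieldType) (T : finType) (A : {set T}) :
  \sum_(x : T) (x \in A)%:R = #|A|%:R :> R.
Proof.
by rewrite -sum1_card natr_sum [RHS]big_mkcond; apply: eq_bigr => x _; case: (x \in A).
Qed.

Lemma perm_two_transitive (T : finType) (x y x' y' : T) : x != y -> x' != y' ->
  exists sg : {perm T}, sg x = x' /\ sg y = y'.
Proof.
move=> xy x'y'; pose t := tperm x x'; exists (t * tperm (t y) y')%g.
rewrite !permM !tpermL; split=> //; apply: tpermD; last by rewrite eq_sym.
by rewrite -[x' in _ != x'](tpermL x x') (inj_eq perm_inj) eq_sym.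
Qed.

Lemma sumr_pair (R : nmodType) (I J : finType) (F : I * J -> R) :
  \sum_p F p = \sum_i \sum_j F (i, j).
Proof. by rewrite pair_big; apply: eq_bigr => -[]. Qed.

Lemma sumr_diag_offdiag (R : numFieldType) (T : finType) (a b : R) :
  \sum_(x : T) \sum_(y : T) ((x == y)%:R * a + (x != y)%:R * b) =
  #|T|%:R * a + (#|T| * #|T|.-1)%:R * b.
Proof.
have row (x : T) : \sum_y ((x == y)%:R * a + (x != y)%:R * b) = a + #|T|.-1%:R * b.
  rewrite (bigD1 x) //= eqxx mul1r mul0r addr0; congr (_ + _).
  rewrite (eq_bigr (fun=> b)) ?sumr_const ?cardC1 ?mulr_natl // => y yx.
  by rewrite eq_sym (negbTE yx) mul0r mul1r add0r.
by rewrite (eq_bigr _ (fun x _ => row x)) sumr_const -mulr_natl natrM; ring.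
Qed.

Section ReceiverState.

Variables (R : numFieldType) (N r s : nat).

Local Notation state := ({set 'I_N} * {set 'I_N})%type.

Lemma card_valid_pairs :
  #|[set p : state | valid_pair r s p]| = ('C(N, r) * 'C(N - r, s))%N.
Proof.
rewrite -sum1_card (eq_bigl (fun p : state =>
    xpredT p.1 && (fun H W => valid_pair r s (H, W)) p.1 p.2)) => [|[H W]];
  last by rewrite inE.
rewrite -(pair_big_dep xpredT (fun H W => valid_pair r s (H, W)) (fun _ _ => 1%N)) /=.
rewrite -[N in 'C(N, r)]card_ord -card_draws -sum_nat_const.
rewrite [RHS]big_mkcond /=; apply: eq_bigr => H _; rewrite inE.
have [hH | nH] := eqVneq #|H| r; last first.
  by rewrite big_pred0 // => W; rewrite /valid_pair /= (negbTE nH).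
rewrite (eq_bigl (mem [set W : {set 'I_N} | W \subset ~: H & #|W| == s])); last first.
  by move=> W; rewrite /valid_pair /= hH eqxx inE.
rewrite sum1_card cards_draws.
congr 'C(_, _); have := cardsC H; rewrite card_ord hH.
by move=> /(congr1 (subn^~ r)); rewrite addKn.
Qed.

Definition state_weight (p : state) : R :=
  if valid_pair r s p then ('C(N, r)%:R)^-1 * ('C(N - r, s)%:R)^-1 else 0.

Definition state_mean (f : state -> R) : R := \sum_p state_weight p * f p.

Lemma state_mean_ext (f g : state -> R) :
  (forall p, valid_pair r s p -> f p = g p) -> state_mean f = state_mean g.
Proof.
move=> efg; apply: eq_bigr => p _; rewrite /state_weight.
by case: ifP => [/efg -> | _]; rewrite ?mul0r.
Qed.

Lemma state_mean_sum (I : finType) (f : I -> state -> R) :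
  \sum_i state_mean (f i) = state_mean (fun p => \sum_i f i p).
Proof.
by rewrite exchange_big; apply: eq_bigr => p _; rewrite mulr_sumr.
Qed.

Lemma state_meanZ (a : R) (f : state -> R) :
  state_mean (fun p => a * f p) = a * state_mean f.
Proof. by rewrite mulr_sumr; apply: eq_bigr => p _; rewrite mulrCA. Qed.

Lemma valid_pair_perm (sg : {perm 'I_N}) (p : state) :
  valid_pair r s (sg @: p.1, sg @: p.2) = valid_pair r s p.
Proof.
have sg_inj : injective sg := @perm_inj _ sg.
rewrite /valid_pair /= !card_imset // -!disjoints_subset -!setI_eq0.
by rewrite -imsetI ?imset_eq0 // => x y _ _; apply: sg_inj.
Qed.

Lemma state_mean_perm (sg : {perm 'I_N}) (f : state -> R) :
  state_mean (fun p => f (sg @: p.1, sg @: p.2)) = state_mean f.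
Proof.
have sg_inj : injective sg := @perm_inj _ sg.
rewrite /state_mean [RHS](reindex_inj (h := fun p : state => (sg @: p.1, sg @: p.2))).
  by apply: eq_bigr => p _; rewrite /state_weight valid_pair_perm.
by move=> [H W] [H' W'] [/(imset_inj sg_inj) -> /(imset_inj sg_inj) ->].
Qed.

Hypotheses (le_r_N : (r <= N)%N) (le_s_Nr : (s <= N - r)%N).

Lemma state_mean1 : state_mean (fun=> 1) = 1.
Proof.
rewrite /state_mean (eq_bigr (fun p => if valid_pair r s p then
  ('C(N, r)%:R)^-1 * ('C(N - r, s)%:R)^-1 else 0)); last first.
  by move=> p _; rewrite mulr1.
rewrite -big_mkcond sumr_const -cardsE card_valid_pairs.
by rewrite -[LHS]mulr_natr natrM mulrACA !mulVf ?mulr1 // pnatr_eq0 -lt0n bin_gt0.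
Qed.

Lemma state_mean_wants (j : 'I_N) : state_mean (fun p => (j \in p.2)%:R) = s%:R / N%:R.
Proof.
have N_neq0 : N%:R != 0 :> R by rewrite pnatr_eq0 -lt0n (leq_ltn_trans _ (ltn_ord j)).
have mean_const (j' : 'I_N) :
    state_mean (fun p => (j' \in p.2)%:R) = state_mean (fun p => (j \in p.2)%:R).
  rewrite -(state_mean_perm (tperm j j')); apply: state_mean_ext => p _ /=.
  by rewrite -[X in X \in _](tpermL j j') mem_imset //; apply: perm_inj.
apply: (mulfI N_neq0); rewrite [RHS]mulrCA divff // mulr1.
have -> : N%:R = \sum_(j' : 'I_N) 1 :> R by rewrite sumr_const card_ord.
rewrite mulr_suml; under eq_bigr => j' _ do rewrite mul1r -(mean_const j').
rewrite state_mean_sum.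
transitivity (state_mean (fun p => s%:R * 1)); last first.
  by rewrite state_meanZ state_mean1 mulr1.
by apply: state_mean_ext => p /and3P [_ _ /eqP <-]; rewrite sumr_mem_card mulr1.
Qed.

Lemma state_mean_wants_has_diag (x : 'I_N) :
  state_mean (fun p => (x \in p.2)%:R * (x \in p.1)%:R) = 0.
Proof.
transitivity (state_mean (fun=> 0)); last by apply: big1 => p _; rewrite mulr0.
apply: state_mean_ext => p /and3P [_ /subsetP WH _].
case xW: (x \in p.2); last by rewrite mul0r.
by have := WH x xW; rewrite inE => /negPf ->; rewrite mulr0.
Qed.

Lemma state_mean_wants_has (j l : 'I_N) :
  state_mean (fun p => (j \in p.2)%:R * (l \in p.1)%:R) =
  (j != l)%:R * (s%:R * r%:R / (N%:R * N.-1%:R)).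
Proof.
have [<- | jl] := eqVneq j l; first by rewrite state_mean_wants_has_diag mul0r.
rewrite mul1r; set m := state_mean _.
have N_gt1 : (1 < N)%N.
  rewrite ltnNge; apply: contra jl => N_le1; apply/eqP/val_inj => /=.
  by move: (ltn_ord j) (ltn_ord l); lia.
have NN1_neq0 : N%:R * N.-1%:R != 0 :> R.
  by rewrite mulf_neq0 // pnatr_eq0 -lt0n ?(ltnW N_gt1) // -subn1 subn_gt0.
have mean_offdiag (x y : 'I_N) : x != y ->
    state_mean (fun p => (x \in p.2)%:R * (y \in p.1)%:R) = m.
  move=> xy; have [sg [<- <-]] := perm_two_transitive jl xy.
  rewrite -(state_mean_perm sg); apply: state_mean_ext => p _ /=.
  by rewrite !mem_imset //; apply: perm_inj.
have row_sum (x : 'I_N) :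
    \sum_y state_mean (fun p => (x \in p.2)%:R * (y \in p.1)%:R) = N.-1%:R * m.
  rewrite (bigD1 x) //= state_mean_wants_has_diag add0r (eq_bigr (fun=> m)); last first.
    by move=> y yx; apply: mean_offdiag; rewrite eq_sym.
  by rewrite sumr_const cardC1 card_ord mulr_natl.
apply: (mulfI NN1_neq0); rewrite [RHS]mulrCA divff // mulr1 -mulrA.
transitivity (\sum_x \sum_y state_mean (fun p => (x \in p.2)%:R * (y \in p.1)%:R)).
  rewrite (eq_bigr _ (fun x _ => row_sum x)) sumr_const card_ord.
  by rewrite (mulr_natl (N.-1%:R * m)).
under eq_bigr do rewrite state_mean_sum.
rewrite state_mean_sum.
transitivity (state_mean (fun=> s%:R * r%:R * 1)); last first.
  by rewrite state_meanZ state_mean1 mulr1.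
apply: state_mean_ext => p /and3P [/eqP <- _ /eqP <-].
rewrite mulr1 -!sumr_mem_card mulr_suml; apply: eq_bigr => x _.
by rewrite mulr_sumr.
Qed.

End ReceiverState.

Definition linked_pairs (T : finType) (e : rel T) : {set {set T}} :=
  [set E : {set T} | (#|E| == 2) && [forall u in E, forall v in E, (u != v) ==> e u v]].

Lemma card_linked_pairs (T : finType) (e : rel T) :
  symmetric e -> irreflexive e ->
  (#|linked_pairs e| * 2 = \sum_u \sum_v e u v)%N.
Proof.
move=> e_sym e_irr; rewrite pair_big /= -[RHS]big_mkcond /=.
have pair_linked (p : T * T) : e p.1 p.2 -> [set p.1; p.2] \in linked_pairs e.
  case: p => u v /= euv; rewrite inE cards2.
  have -> /= : u != v by apply: contraTneq euv => ->; rewrite e_irr.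
  apply/forall_inP => x /set2P hx; apply/forall_inP => y /set2P hy; apply/implyP.
  by case: hx hy => -> [] ->; rewrite ?eqxx // e_sym.
rewrite (partition_big (fun p => [set p.1; p.2]) (mem (linked_pairs e))) //=.
rewrite -sum_nat_const; apply: eq_bigr => E.
rewrite inE => /andP [/cards2P [a [b [ab ->]]] linked].
transitivity (\sum_(p in [set (a, b); (b, a)]) 1)%N.
  by rewrite sum1_card cards2 xpair_eqE (negbTE ab).
apply: eq_bigl => [[u v]] /=; rewrite !inE !xpair_eqE.
have eab : e a b := implyP (forall_inP (forall_inP linked a (set21 a b)) b (set22 a b)) ab.
apply/orP/andP => [[/andP [/eqP -> /eqP ->] | /andP [/eqP -> /eqP ->]] | [euv /eqP uv_ab]].
- by rewrite eab.
- by rewrite e_sym eab setUC.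
have u_ab : u \in [set a; b] by rewrite -uv_ab set21.
have v_ab : v \in [set a; b] by rewrite -uv_ab set22.
have uv : u != v by apply: contraTneq euv => ->; rewrite e_irr.
by case/set2P: u_ab uv => ->; case/set2P: v_ab => ->; rewrite ?eqxx /=; auto.
Qed.

Section IdncGraph.

Variables (M N : nat) (c : config M N).

Definition idnc_arc (u v : 'I_M * 'I_N) : bool :=
  [&& u \in idnc_vertices c, v \in idnc_vertices c, u != v & idnc_adj c u v].

Lemma idnc_arc_sym : symmetric idnc_arc.
Proof.
move=> u v; rewrite /idnc_arc /idnc_adj.
by rewrite [v.2 == _]eq_sym [v == u]eq_sym [(v.2 \in _) && _]andbC; do !bool_congr.
Qed.

Lemma idnc_arc_irr : irreflexive idnc_arc.
Proof. by move=> u; rewrite /idnc_arc eqxx !andbF. Qed.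

Lemma idnc_edgesE : idnc_edges c = linked_pairs idnc_arc.
Proof.
apply/setP => E; rewrite !inE -andbA; case E2: (#|E| == 2) => /=; last by rewrite andbF.
apply/andP/forall_inP => [[/subsetP EV /forall_inP adjE] u uE | arcE].
  apply/forall_inP => v vE; apply/implyP => uv.
  by rewrite /idnc_arc EV ?EV //= uv (implyP (forall_inP (adjE u uE) v vE)).
split.
  apply/subsetP => u uE; have /cards2P [a [b [ab Eab]]] := E2.
  have [v vE uv] : exists2 v, v \in E & u != v.
    move: uE; rewrite Eab => /set2P [] ->; [exists b | exists a];
    by rewrite ?set21 ?set22 // eq_sym.
  by have /and4P [] := implyP (forall_inP (arcE u uE) v vE) uv.
apply/forall_inP => u uE; apply/forall_inP => v vE; apply/implyP => uv.
by have /and4P [] := implyP (forall_inP (arcE u uE) v vE) uv.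
Qed.

Lemma card_idnc_edges (R : numFieldType) :
  #|idnc_edges c|%:R =
  2^-1 * \sum_i \sum_k \sum_j \sum_l (idnc_arc (i, j) (k, l))%:R :> R.
Proof.
have := card_linked_pairs idnc_arc_sym idnc_arc_irr.
move=> /(congr1 (fun n => n%:R : R)); rewrite natrM natr_sum.
under eq_bigr do rewrite natr_sum.
have two_neq0 : 2%:R != 0 :> R by rewrite pnatr_eq0.
move=> arcs; apply: (mulIf two_neq0); rewrite idnc_edgesE arcs mulrAC mulVf // mul1r.
rewrite sumr_pair; apply: eq_bigr => i _.
by under eq_bigr do rewrite sumr_pair; exact: exchange_big.
Qed.

Hypothesis wants_lacked : forall k, Ws c k \subset ~: Hs c k.

Lemma idnc_arc_indicator (R : numFieldType) i j k l :
  (idnc_arc (i, j) (k, l))%:R = (i != k)%:R *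
    ((j \in Ws c i)%:R * (j == l)%:R * (l \in Ws c k)%:R +
     (j \in Ws c i)%:R * (l \in Hs c i)%:R * ((l \in Ws c k)%:R * (j \in Hs c k)%:R))
    :> R.
Proof.
have lacked m x : x \in Ws c m -> (x \in Hs c m) = false.
  by move=> /(subsetP (wants_lacked m)); rewrite inE => /negPf.
rewrite /idnc_arc /idnc_vertices /idnc_adj !inE /= xpair_eqE.
case jW: (j \in Ws c i); case lW: (l \in Ws c k);
  rewrite ?andbF /= ?(mul0r, mulr0, addr0) //.
have [<- | ik] /= := eqVneq i k.
  by rewrite (lacked _ _ jW) andFb orbF andNb mul0r.
have [<- | jl] /= := eqVneq j l.
  by rewrite (lacked _ _ jW) !(mul1r, mulr1, mul0r, mulr0, addr0).
rewrite !(mul1r, mulr1, mul0r, add0r).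
by case: (j \in Hs c k); case: (l \in Hs c i); rewrite ?(mul1r, mul0r, mulr0).
Qed.

End IdncGraph.

Section Configurations.

Variables (R : numFieldType) (M N : nat) (rho psi : 'I_M -> nat).

Local Notation prob := (config_prob R rho psi).
Local Notation mean k := (state_mean (rho k) (psi k)).
Local Notation state := ({set 'I_N} * {set 'I_N})%type.

Lemma config_prob_invalid (c : config M N) m :
  ~~ valid_pair (rho m) (psi m) (c m) -> prob c = 0.
Proof. by move=> invalid_m; rewrite /config_prob (bigD1 m) //= ifN ?mul0r. Qed.

Lemma config_mean_ext (f g : config M N -> R) :
  (forall c : config M N, (forall m, valid_pair (rho m) (psi m) (c m)) -> f c = g c) ->
  \sum_c prob c * f c = \sum_c prob c * g c.
Proof.
move=> efg; apply: eq_bigr => c _.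
have [/forallP valid_c | /forallPn [m /config_prob_invalid ->]] :=
  boolP [forall m, valid_pair (rho m) (psi m) (c m)]; first by rewrite efg.
by rewrite !mul0r.
Qed.

Hypotheses (le_rho : forall k, (rho k <= N)%N) (le_psi : forall k, (psi k <= N - rho k)%N).

Lemma config_mean_indep (i k : 'I_M) (f g : state -> R) :
  i != k -> \sum_(c : config M N) prob c * (f (c i) * g (c k)) = mean i f * mean k g.
Proof.
move=> ik; have ki : (k == i) = false by rewrite eq_sym (negbTE ik).
pose sel m p := if m == i then f p else if m == k then g p else 1.
have split_ik (G : 'I_M -> R) :
    \prod_m G m = G i * G k * \prod_(m | (m != i) && (m != k)) G m.
  by rewrite (bigD1 i) //= (bigD1 k) /= ?mulrA // eq_sym.
have sel_others m : (m != i) && (m != k) -> forall p, sel m p = 1.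
  by case/andP => /negbTE mi /negbTE mk p; rewrite /sel mi mk.
have prod_sel (c : config M N) : \prod_m sel m (c m) = f (c i) * g (c k).
  rewrite split_ik [\prod_(m | _) _]big1 ?mulr1 => [|m /sel_others -> //].
  by rewrite /sel eqxx ki eqxx.
have prod_mean :
    \prod_m \sum_p state_weight R (rho m) (psi m) p * sel m p = mean i f * mean k g.
  rewrite split_ik [\prod_(m | _) _]big1 ?mulr1 => [|m /sel_others sel1].
    by rewrite /sel eqxx ki eqxx.
  under eq_bigr do rewrite sel1.
  exact: state_mean1.
rewrite -prod_mean bigA_distr_bigA /=; apply: eq_bigr => c _.
by rewrite big_split /= prod_sel.
Qed.

Lemma expected_arc (i k : 'I_M) (j l : 'I_N) : i != k ->
  \sum_(c : config M N) prob c * (idnc_arc c (i, j) (k, l))%:R =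
  (j == l)%:R * ((psi i)%:R / N%:R * ((psi k)%:R / N%:R)) +
  (j != l)%:R * ((psi i)%:R * (rho i)%:R / (N%:R * N.-1%:R) *
                 ((psi k)%:R * (rho k)%:R / (N%:R * N.-1%:R))).
Proof.
move=> ik.
pose same_i (p : state) := (j \in p.2)%:R * (j == l)%:R :> R.
pose same_k (p : state) := (l \in p.2)%:R :> R.
pose cross_i (p : state) := (j \in p.2)%:R * (l \in p.1)%:R :> R.
pose cross_k (p : state) := (l \in p.2)%:R * (j \in p.1)%:R :> R.
transitivity (\sum_(c : config M N) prob c * (same_i (c i) * same_k (c k))
            + \sum_(c : config M N) prob c * (cross_i (c i) * cross_k (c k))).
  rewrite -big_split /=; under [RHS]eq_bigr do rewrite -mulrDr.
  apply: config_mean_ext => c valid_c.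
  rewrite idnc_arc_indicator ?ik ?mul1r // => m.
  by case/and3P: (valid_c m).
rewrite !config_mean_indep //.
have -> : mean i same_i = (j == l)%:R * mean i (fun p => (j \in p.2)%:R).
  by rewrite -state_meanZ; apply: state_mean_ext => p _; apply: mulrC.
rewrite /same_k /cross_i /cross_k !state_mean_wants ?state_mean_wants_has //.
rewrite [l == j]eq_sym.
by case: (j == l); rewrite /= ?(mul1r, mul0r, add0r, addr0).
Qed.

Lemma expected_arcs_between (i k : 'I_M) : (1 < N)%N ->
  \sum_(c : config M N) prob c * \sum_j \sum_l (idnc_arc c (i, j) (k, l))%:R =
  (k != i)%:R *
    ((psi i)%:R * ((psi k)%:R / N%:R * (1 + (rho k)%:R * (rho i)%:R / N.-1%:R))).
Proof.
move=> N_gt1; have [<- | ki] := eqVneq k i.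
  rewrite mul0r (config_mean_ext (g := fun=> 0)) ?big1 // => [c _ | c valid_c].
    exact: mulr0.
  rewrite big1 // => j _; rewrite big1 // => l _.
  by rewrite idnc_arc_indicator ?eqxx ?mul0r // => m; case/and3P: (valid_c m).
have ik : i != k by rewrite eq_sym.
under eq_bigr do rewrite mulr_sumr; rewrite exchange_big /=.
under eq_bigr do (under eq_bigr do rewrite mulr_sumr; rewrite exchange_big /=).
under eq_bigr do under eq_bigr do rewrite expected_arc //.
rewrite sumr_diag_offdiag card_ord mul1r natrM.
have N_neq0 : N%:R != 0 :> R by rewrite pnatr_eq0 -lt0n (ltnW N_gt1).
have N1_neq0 : N.-1%:R != 0 :> R by rewrite pnatr_eq0 -lt0n -subn1 subn_gt0.
by field; rewrite N_neq0 N1_neq0.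
Qed.

End Configurations.

Unset Implicit Arguments.

Theorem theorem4 (R : realFieldType) (M N : nat) (rho psi : 'I_M -> nat)
    (hN : (2 <= N)%N)
    (hrho : forall k, (rho k <= N)%N)
    (hpsi : forall k, (psi k <= N - rho k)%N) :
  @expected_edges R M N rho psi =
    2^-1 * \sum_(i : 'I_M) (psi i)%:R *
      (\sum_(k : 'I_M | k != i)
          (psi k)%:R / N%:R * (1 + (rho k)%:R * (rho i)%:R / (N.-1)%:R)).
Proof.
transitivity (2^-1 * \sum_i \sum_k \sum_(c : config M N)
    config_prob R rho psi c * \sum_j \sum_l (idnc_arc c (i, j) (k, l))%:R).
  rewrite /expected_edges; under eq_bigr do rewrite card_idnc_edges mulrCA.
  rewrite -mulr_sumr; congr (_ * _).
  under eq_bigr do rewrite mulr_sumr.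
  rewrite exchange_big; apply: eq_bigr => i _.
  under eq_bigr do rewrite mulr_sumr.
  by rewrite exchange_big.
congr (_ * _); apply: eq_bigr => i _.
rewrite mulr_sumr [RHS]big_mkcond; apply: eq_bigr => k _.
by rewrite expected_arcs_between //; case: (k != i); rewrite ?mul1r ?mul0r.
Qed.
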